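(* Let $g$ be of $n^\alpha$ type. Let $X_N$ have distribution $\mathcal P_{N^\beta\varphi}$ for some $\beta>\alpha$ and $\varphi\ge0$. Then for any $r_0<\beta/\alpha$ and $\delta>0$, $$\lim_{N\to\infty}N^{-r_0}\ln P\big[|N^{-\beta/\alpha}X_N-\varphi^{1/\alpha}|\ge\delta\big]=-\infty .$$
   Context: $g:\mathbb N_0\to[0,\infty)$ with $g(n)=0$ iff $n=0$, $|g(n+1)-g(n)|\le g^*$, nondecreasing, $\lim_{n\to\infty}g(n)/n^\alpha=1$ with $\alpha\in(0,1]$. $g(0)!=1$, $g(n)!=\prod_{i=1}^ng(i)$, $Z(\phi)=\sum_n\phi^n/g(n)!$, $\mathcal P_\phi(n)=\phi^n/(g(n)!Z(\phi))$ for $\phi\ge0$. *)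

From Stdlib Require Import Reals ClassicalDescription.
From Coquelicot Require Import Coquelicot.
Open Scope R_scope.

(* Real power x^y with the convention 0^y = 0 (x <= 0 gives 0);
   for x > 0 it is Rpower x y = exp (y ln x). *)
Definition rpow (x y : R) : R :=
  if Rle_dec x 0 then 0 else Rpower x y.

Definition n_alpha_type (g : nat -> R) (alpha : R) : Prop :=
  0 < alpha <= 1 /\
  (forall n, 0 <= g n) /\
  (forall n, g n = 0 <-> n = 0%nat) /\
  (exists gstar : R, forall n, Rabs (g (S n) - g n) <= gstar) /\
  (forall n, g n <= g (S n)) /\
  is_lim_seq (fun n => g n / rpow (INR n) alpha) 1.

Fixpoint gfact (g : nat -> R) (n : nat) : R :=
  match n with
  | O => 1
  | S m => gfact g m * g (S m)
  end.

Definition Zpart (g : nat -> R) (phi : R) : R :=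
  Series (fun n => phi ^ n / gfact g n).

Definition Pdist (g : nat -> R) (phi : R) (n : nat) : R :=
  phi ^ n / (gfact g n * Zpart g phi).

Definition Prob (g : nat -> R) (phi : R) (A : nat -> Prop) : R :=
  Series (fun n => match excluded_middle_informative (A n) with
                   | left _ => Pdist g phi n
                   | right _ => 0 end).

(* u N = N^{-r} * ln (p N) tends to -infinity, with the convention ln 0 = -oo
   (so terms with p N = 0 are equal to -oo and are below every bound). *)
Definition scaled_log_to_minus_infty (r : R) (p : nat -> R) : Prop :=
  forall M : R, exists N0 : nat, forall N : nat, (N0 <= N)%nat ->
    p N = 0 \/ (0 < p N /\ rpow (INR N) (- r) * ln (p N) <= M).

From Stdlib Require Import Reals Lra Lia ClassicalDescription.
From Coquelicot Require Import Coquelicot.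
Open Scope R_scope.

(* The weights [w n = lam^n / g(n)!] of [P_lam] satisfy [w (n+1) / w n = lam / g (n+1)].
   Write [lam = (c T)^alpha] with [c = phi^(1/alpha)] and [T = N^(beta/alpha)].  Since
   [g n ~ n^alpha], for a fixed [kappa > 1] this ratio is at most some [q < 1] once
   [n >= c kappa^2 T], and at least [1/q] once [n <= c T / kappa^2].  A deviation
   [|n/T - c| >= delta] puts [n] about [delta T / 2] steps beyond one of these thresholds,
   whose weight is at most the normalising sum, so [P_lam n <= q^(delta T/2 - 2)].  Adding
   the [O(T)] terms below and the geometric tail above gives [P <= exp (- b T)], hence
   [N^(-r0) ln P <= - b N^(beta/alpha - r0)], which tends to [-oo] because [r0 < beta/alpha]. *)

Lemma Series_const_0 : Series (fun _ => 0) = 0.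
Proof.
  rewrite (Series_ext _ (fun _ => 0 * 0)) by (intros; ring).
  rewrite Series_scal_l; ring.
Qed.

Lemma Series_nonneg (a : nat -> R) :
  (forall n, 0 <= a n) -> ex_series a -> 0 <= Series a.
Proof.
  intros Ha Hex; rewrite <- Series_const_0.
  apply Series_le; auto; intros n; split; [lra | apply Ha].
Qed.

Lemma Series_ge_term (a : nat -> R) (m : nat) :
  (forall n, 0 <= a n) -> ex_series a -> a m <= Series a.
Proof.
  intros Ha Hex.
  assert (Hsum : sum_f_R0 a m <= Series a).
  { apply sum_incr; [apply is_series_Reals, Series_correct, Hex | exact Ha]. }
  destruct m as [|m]; simpl in *; [lra|].
  assert (0 <= sum_f_R0 a m) by (apply cond_pos_sum, Ha). lra.
Qed.

Lemma ex_series_le_R (a b : nat -> R) :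
  (forall n, 0 <= a n <= b n) -> ex_series b -> ex_series a.
Proof.
  intros Hab Hb; apply (@ex_series_le R_AbsRing R_CompleteNormedModule _ b); auto.
  intros n; change norm with Rabs; simpl.
  rewrite Rabs_pos_eq; apply Hab.
Qed.

Lemma ex_series_scaled_geom (E q : R) :
  0 <= q < 1 -> ex_series (fun k => E * q ^ k).
Proof.
  intros Hq.
  apply (ex_series_scal_l (K := R_AbsRing) (V := R_NormedModule)).
  apply ex_series_geom; rewrite Rabs_pos_eq; lra.
Qed.

Lemma Series_le_geometric_tail (e : nat -> R) (E q : R) (K : nat) :
  0 <= q < 1 -> (forall n, 0 <= e n) ->
  (forall n, (n < K)%nat -> e n <= E) ->
  (forall k, e (K + k)%nat <= E * q ^ k) ->
  0 <= Series e <= E * (INR K + / (1 - q)).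
Proof.
  intros Hq He Hhead Htail.
  assert (Htail_ex : ex_series (fun k => e (K + k)%nat)).
  { apply ex_series_le_R with (fun k => E * q ^ k); [|apply ex_series_scaled_geom; lra].
    intros k; split; [apply He | apply Htail]. }
  assert (Hex : ex_series e) by (apply ex_series_incr_n with K; exact Htail_ex).
  assert (Htail_sum : Series (fun k => e (K + k)%nat) <= E * / (1 - q)).
  { rewrite <- Series_geom by (rewrite Rabs_pos_eq; lra).
    rewrite <- Series_scal_l.
    apply Series_le; [|apply ex_series_scaled_geom; lra].
    intros k; split; [apply He | apply Htail]. }
  split; [apply Series_nonneg; auto|].
  destruct K as [|K].
  - rewrite (Series_ext e (fun k => e (0 + k)%nat)) by reflexivity. simpl INR. lra.
  - rewrite (Series_incr_n e (S K)) by (auto; lia). simpl pred.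
    assert (Hhead_sum : sum_f_R0 e K <= E * INR (S K)).
    { rewrite <- sum_cte. apply sum_Rle. intros n Hn; apply Hhead; lia. }
    lra.
Qed.

Lemma pow_le_pow_of_le_1 (q : R) (a b : nat) :
  0 <= q <= 1 -> (a <= b)%nat -> q ^ b <= q ^ a.
Proof.
  intros Hq Hab.
  replace b with (a + (b - a))%nat by lia; rewrite pow_add.
  assert (q ^ (b - a) <= 1) by (rewrite <- (pow1 (b - a)); apply pow_incr; lra).
  assert (0 <= q ^ a) by (apply pow_le; lra).
  nra.
Qed.

Lemma geometric_decay_from (w : nat -> R) (q : R) (m : nat) :
  0 <= q -> (forall n, (m <= n)%nat -> w (S n) <= q * w n) ->
  forall j, w (m + j)%nat <= q ^ j * w m.
Proof.
  intros Hq Hw j; induction j as [|j IH]; [rewrite Nat.add_0_r; simpl; lra|].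
  rewrite Nat.add_succ_r; simpl.
  eapply Rle_trans; [apply Hw; lia|].
  rewrite Rmult_assoc; apply Rmult_le_compat_l; auto.
Qed.

Lemma geometric_growth_until (w : nat -> R) (q : R) (m : nat) :
  0 <= q -> (forall n, (n < m)%nat -> w n <= q * w (S n)) ->
  forall j n, (n + j)%nat = m -> w n <= q ^ j * w m.
Proof.
  intros Hq Hw j; induction j as [|j IH]; intros n Hn.
  - rewrite Nat.add_0_r in Hn; subst; simpl; lra.
  - simpl; eapply Rle_trans; [apply Hw; lia|].
    rewrite Rmult_assoc; apply Rmult_le_compat_l; auto.
    apply IH; lia.
Qed.

Definition weight (g : nat -> R) (lam : R) (n : nat) : R := lam ^ n / gfact g n.

Section Weights.

Variables (g : nat -> R) (lam : R).
Hypothesis g_pos : forall n, (0 < n)%nat -> 0 < g n.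
Hypothesis g_incr : Un_growing g.
Hypothesis lam_pos : 0 < lam.

Lemma gfact_pos n : 0 < gfact g n.
Proof.
  induction n as [|n IH]; simpl; [lra|].
  apply Rmult_lt_0_compat; auto; apply g_pos; lia.
Qed.

Lemma weight_pos n : 0 < weight g lam n.
Proof. apply Rdiv_lt_0_compat; [apply pow_lt, lam_pos | apply gfact_pos]. Qed.

Lemma weight_S n : weight g lam (S n) * g (S n) = lam * weight g lam n.
Proof.
  unfold weight; simpl.
  assert (0 < g (S n)) by (apply g_pos; lia).
  pose proof (gfact_pos n). field; lra.
Qed.

Lemma weight_S_le n q : lam <= q * g (S n) -> weight g lam (S n) <= q * weight g lam n.
Proof.
  intros H.
  assert (Hg : 0 < g (S n)) by (apply g_pos; lia).
  pose proof (weight_S n); pose proof (weight_pos n).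
  apply (Rmult_le_reg_r (g (S n))); nra.
Qed.

Lemma weight_le_S n q : g (S n) <= q * lam -> weight g lam n <= q * weight g lam (S n).
Proof.
  intros H.
  pose proof (weight_S n); pose proof (weight_pos (S n)).
  apply (Rmult_le_reg_l lam); nra.
Qed.

Section Gap.

Variables (q : R) (m m' : nat).
Hypothesis q_range : 0 <= q < 1.
Hypothesis lam_le_q_g : lam <= q * g (S m).
Hypothesis g_le_q_lam : g m' <= q * lam.

Lemma weight_le_above j : weight g lam (m + j) <= q ^ j * weight g lam m.
Proof.
  apply geometric_decay_from; [lra|].
  intros n Hn; apply weight_S_le.
  apply Rle_trans with (1 := lam_le_q_g).
  apply Rmult_le_compat_l; [lra|].
  apply Rge_le, growing_prop; auto; lia.
Qed.

Lemma weight_le_below K n : (n + K <= m')%nat -> weight g lam n <= q ^ K * weight g lam m'.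
Proof.
  intros Hn.
  apply Rle_trans with (q ^ (m' - n) * weight g lam m').
  - apply geometric_growth_until; [lra| |lia].
    intros k Hk; apply weight_le_S.
    apply Rle_trans with (2 := g_le_q_lam).
    apply Rge_le, growing_prop; auto; lia.
  - apply Rmult_le_compat_r; [apply Rlt_le, weight_pos|].
    apply pow_le_pow_of_le_1; lia || lra.
Qed.

Lemma ex_series_weight : ex_series (weight g lam).
Proof.
  apply ex_series_incr_n with m.
  apply ex_series_le_R with (fun j => weight g lam m * q ^ j);
    [|apply ex_series_scaled_geom; lra].
  intros j; split; [apply Rlt_le, weight_pos|].
  rewrite Rmult_comm; apply weight_le_above.
Qed.

Lemma Pdist_weight n : Pdist g lam n = weight g lam n / Series (weight g lam).
Proof.
  unfold Pdist, Zpart, weight.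
  pose proof (gfact_pos n).
  pose proof (Series_ge_term (weight g lam) 0 (fun k => Rlt_le _ _ (weight_pos k))
    ex_series_weight).
  pose proof (weight_pos 0).
  unfold weight in *. field; split; lra.
Qed.

Lemma Prob_le_of_gap (A : nat -> Prop) (K : nat) :
  (forall n, A n -> (m + K <= n)%nat \/ (n + K <= m')%nat) ->
  0 <= Prob g lam A <= q ^ K * (INR (m + K) + / (1 - q)).
Proof.
  intros HA.
  set (Z := Series (weight g lam)).
  assert (HZ : forall k, weight g lam k <= Z).
  { intros k; apply Series_ge_term; [intros; apply Rlt_le, weight_pos | apply ex_series_weight]. }
  assert (HZpos : 0 < Z) by (pose proof (HZ 0%nat); pose proof (weight_pos 0); lra).
  assert (Hq : 0 <= q ^ K) by (apply pow_le; lra).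
  assert (HP : forall n k, weight g lam n <= q ^ k * Z -> Pdist g lam n <= q ^ k).
  { intros n k Hn; rewrite Pdist_weight; fold Z.
    apply (Rmult_le_reg_r Z); auto.
    unfold Rdiv; rewrite Rmult_assoc, Rinv_l; lra. }
  apply Series_le_geometric_tail; [lra| | |].
  - intros n; destruct excluded_middle_informative; [|lra].
    rewrite Pdist_weight; apply Rlt_le, Rdiv_lt_0_compat; auto; apply weight_pos.
  - intros n Hn; destruct excluded_middle_informative as [An|]; [|lra].
    apply HP; destruct (HA n An) as [|Hbelow]; [lia|].
    apply Rle_trans with (1 := weight_le_below K n Hbelow).
    apply Rmult_le_compat_l; auto.
  - intros k; destruct excluded_middle_informative; [|apply Rmult_le_pos; auto; apply pow_le; lra].
    rewrite <- pow_add; apply HP.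
    rewrite <- Nat.add_assoc.
    apply Rle_trans with (1 := weight_le_above (K + k)).
    apply Rmult_le_compat_l; auto; apply pow_le; lra.
Qed.

End Gap.

End Weights.

Lemma rpow_pos_eq (x y : R) : 0 < x -> rpow x y = Rpower x y.
Proof. intros Hx; unfold rpow; destruct Rle_dec; [lra | reflexivity]. Qed.

Lemma Rpower_Rinv_l (x y : R) : 0 < x -> Rpower (/ x) y = / Rpower x y.
Proof.
  intros Hx; unfold Rpower; rewrite ln_Rinv by exact Hx.
  rewrite <- exp_Ropp; f_equal; ring.
Qed.

Lemma Rpower_pos (x y : R) : 0 < Rpower x y.
Proof. apply exp_pos. Qed.

Lemma n_alpha_type_pos (g : nat -> R) (alpha : R) :
  n_alpha_type g alpha -> forall n, (0 < n)%nat -> 0 < g n.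
Proof.
  intros (_ & Hge0 & Hzero & _) n Hn.
  destruct (Hge0 n) as [|Heq]; auto.
  symmetry in Heq; apply Hzero in Heq; lia.
Qed.

Lemma n_alpha_type_sandwich (g : nat -> R) (alpha kappa : R) :
  n_alpha_type g alpha -> 1 < kappa ->
  eventually (fun n => Rpower (INR n / kappa) alpha <= g n <= Rpower (kappa * INR n) alpha).
Proof.
  intros (Halpha & _ & _ & _ & _ & Hlim) Hkappa.
  set (rho := Rpower kappa alpha).
  assert (Hrho : 1 < rho).
  { unfold rho; rewrite <- (Rpower_O kappa) by lra; apply Rpower_lt; lra. }
  assert (Hirho : 0 < / rho < 1).
  { split; [apply Rinv_0_lt_compat; lra|].
    rewrite <- Rinv_1; apply Rinv_lt_contravar; lra. }
  assert (Hrho_sum : 2 - / rho <= rho).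
  { assert (rho * / rho = 1) by (field; lra). nra. }
  apply is_lim_seq_spec in Hlim.
  destruct (Hlim (mkposreal (1 - / rho) ltac:(lra))) as [n0 Hn0]; simpl in Hn0.
  exists (S n0); intros n Hn.
  assert (HnR : 0 < INR n) by (apply lt_0_INR; lia).
  specialize (Hn0 n ltac:(lia)).
  rewrite rpow_pos_eq in Hn0 by exact HnR.
  set (P := Rpower (INR n) alpha) in *.
  assert (HP : 0 < P) by apply Rpower_pos.
  assert (Hg : g n = g n / P * P) by (field; lra).
  apply Rabs_def2 in Hn0.
  assert (Hlow : Rpower (INR n / kappa) alpha = P * / rho).
  { unfold Rdiv; rewrite <- Rpower_mult_distr, Rpower_Rinv_l; auto; try lra.
    apply Rinv_0_lt_compat; lra. }
  assert (Hup : Rpower (kappa * INR n) alpha = rho * P).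
  { rewrite <- Rpower_mult_distr; auto; lra. }
  rewrite Hlow, Hup, Hg; split; nra.
Qed.

Lemma is_lim_seq_Rpower_INR (e : R) :
  0 < e -> is_lim_seq (fun N => Rpower (INR N) e) p_infty.
Proof.
  intros He; apply is_lim_seq_spec; intros M.
  set (X := Rpower (Rmax M 1) (/ e)).
  assert (HX : 0 < X) by apply Rpower_pos.
  pose proof (proj2 (is_lim_seq_spec INR p_infty) is_lim_seq_INR X) as [N0 HN0].
  exists N0; intros N HN.
  apply Rle_lt_trans with (Rpower X e).
  - assert (HM1 : 0 < Rmax M 1) by (apply Rlt_le_trans with 1; [lra | apply Rmax_r]).
    unfold X; rewrite Rpower_mult, Rinv_l, Rpower_1 by lra.
    apply Rmax_l.
  - apply Rlt_Rpower_l; auto.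
Qed.

Lemma linear_le_exp (u C D : R) :
  0 < u -> Rbar_locally p_infty (fun T => C * T + D <= exp (u * T)).
Proof.
  intros Hu.
  set (c1 := 2 * Rabs C / u).
  assert (Hc1 : 0 <= c1) by (apply Rdiv_le_0_compat; [pose proof (Rabs_pos C); lra | exact Hu]).
  pose proof (Rabs_pos D); pose proof (RRle_abs D).
  set (V := c1 + Rabs D + 1).
  assert (HV : 1 <= V) by (unfold V; lra).
  exists (2 * V / u); intros T HT.
  set (v := u * T / 2).
  assert (Hv : V < v).
  { apply (Rmult_lt_compat_l (u / 2)) in HT; [|lra].
    replace (u / 2 * (2 * V / u)) with V in HT by (field; lra); unfold v; lra. }
  assert (HT0 : 0 <= T) by (unfold v in Hv; nra).
  assert (HCT : C * T <= c1 * v).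
  { replace (c1 * v) with (Rabs C * T) by (unfold c1, v; field; lra).
    apply Rmult_le_compat_r; [exact HT0 | apply RRle_abs]. }
  assert (Hsq : (1 + v) * (1 + v) <= exp (u * T)).
  { replace (u * T) with (v + v) by (unfold v; field).
    rewrite exp_plus; pose proof (exp_ineq1_le v).
    apply Rmult_le_compat; lra. }
  assert (v * V <= v * v) by (apply Rmult_le_compat_l; lra).
  unfold V in *; nra.
Qed.

Lemma Rbar_locally_le_scal (a X : R) :
  0 < a -> Rbar_locally p_infty (fun T => X <= a * T).
Proof.
  intros Ha; exists (X / a); intros T HT.
  apply (Rmult_lt_compat_l a) in HT; [|exact Ha].
  replace (a * (X / a)) with X in HT by (field; lra); lra.
Qed.

Lemma exp_le_compat (x y : R) : x <= y -> exp x <= exp y.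
Proof. intros [Hlt | ->]; [apply Rlt_le, exp_increasing, Hlt | lra]. Qed.

Lemma exp_pow_le (a x : R) (K : nat) : 0 <= a -> x <= INR K -> exp (- a) ^ K <= exp (- (a * x)).
Proof.
  intros Ha HK; rewrite <- Rpower_pow by apply exp_pos.
  unfold Rpower; rewrite ln_exp; apply exp_le_compat; nra.
Qed.

Lemma Rpower_ratio_bounds (g : nat -> R) (alpha kappa y : R) (m m' : nat) :
  0 < alpha -> 1 < kappa -> 0 < y -> 0 < INR m' ->
  kappa * kappa * INR m' <= y -> kappa * kappa * y <= INR (S m) ->
  Rpower (INR (S m) / kappa) alpha <= g (S m) -> g m' <= Rpower (kappa * INR m') alpha ->
  Rpower y alpha <= Rpower (/ kappa) alpha * g (S m) /\
  g m' <= Rpower (/ kappa) alpha * Rpower y alpha.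
Proof.
  intros Halpha Hkappa Hy Hm' Hlow Hhigh Hgm Hgm'.
  assert (Hik : 0 < / kappa) by (apply Rinv_0_lt_compat; lra).
  split.
  - replace y with (/ kappa * (kappa * y)) at 1 by (field; lra).
    rewrite <- Rpower_mult_distr by nra.
    apply Rmult_le_compat_l; [apply Rlt_le, Rpower_pos|].
    apply Rle_trans with (2 := Hgm), Rle_Rpower_l; [lra | split; [nra|]].
    apply (Rmult_le_reg_r kappa); [lra|].
    replace (INR (S m) / kappa * kappa) with (INR (S m)) by (field; lra); nra.
  - apply Rle_trans with (1 := Hgm').
    rewrite Rpower_mult_distr by assumption.
    apply Rle_Rpower_l; [lra | split; [nra|]].
    apply (Rmult_le_reg_l kappa); [lra|].
    replace (kappa * (/ kappa * y)) with y by (field; lra); nra.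
Qed.

Lemma deviation_gap (g : nat -> R) (alpha c delta kappa : R) :
  0 < alpha -> 0 < c -> 0 < delta -> 1 < kappa ->
  c * (kappa * kappa) <= c + delta / 2 -> (c - delta / 2) * (kappa * kappa) <= c ->
  eventually (fun n => Rpower (INR n / kappa) alpha <= g n <= Rpower (kappa * INR n) alpha) ->
  Rbar_locally p_infty (fun T => exists m m' K : nat,
    Rpower (c * T) alpha <= Rpower (/ kappa) alpha * g (S m) /\
    g m' <= Rpower (/ kappa) alpha * Rpower (c * T) alpha /\
    (forall n, (c + delta) * T <= INR n \/ INR n <= (c - delta) * T ->
       (m + K <= n)%nat \/ (n + K <= m')%nat) /\
    INR (m + K) <= (c + delta) * T /\ delta * T / 2 - 2 <= INR K).
Proof.
  intros Halpha Hc Hdelta Hkappa Hhi Hlo [n0 Hn0].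
  set (k2 := kappa * kappa) in *.
  assert (Hk2 : 1 < k2) by (unfold k2; nra).
  generalize (filter_and _ _ (Rbar_locally_le_scal c ((INR n0 + 1) * k2) Hc)
    (Rbar_locally_le_scal delta 2 Hdelta)).
  apply filter_imp; intros T [HTn0 HTdelta].
  assert (HT : 0 < T) by nra.
  set (x := c * T / k2).
  assert (Hx : x * k2 = c * T) by (unfold x; field; lra).
  assert (Hn0x : INR n0 + 1 <= x) by nra.
  assert (Hx0 : 0 < x) by (pose proof (pos_INR n0); lra).
  assert (Hxy : x <= c * k2 * T).
  { assert (x <= x * k2) by nra. assert (c * T <= c * T * k2) by nra. nra. }
  destruct (nfloor_ex x (Rlt_le _ _ Hx0)) as [m' Hm'].
  destruct (nfloor_ex (c * k2 * T) ltac:(lra)) as [m Hm].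
  destruct (nfloor_ex (delta * T / 2 - 1) ltac:(lra)) as [K HK].
  assert (Hn0m' : INR n0 < INR m') by lra.
  assert (Hn0m : (n0 <= S m)%nat) by (apply INR_le; rewrite S_INR; lra).
  destruct (Rpower_ratio_bounds g alpha kappa (c * T) m m' Halpha Hkappa ltac:(nra)
    ltac:(pose proof (pos_INR n0); lra) ltac:(fold k2; nra) ltac:(fold k2; rewrite S_INR; nra)
    (proj1 (Hn0 _ Hn0m)) (proj2 (Hn0 _ (Nat.lt_le_incl _ _ (INR_lt _ _ Hn0m')))))
    as [Hup Hdown].
  exists m, m', K; repeat split; try assumption.
  - intros n [Habove | Hbelow]; [left | right]; apply INR_le; rewrite plus_INR; nra.
  - rewrite plus_INR; nra.
  - lra.
Qed.

Lemma exists_threshold_ratio (c delta : R) :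
  0 < c -> 0 < delta -> exists kappa, 1 < kappa /\
    c * (kappa * kappa) <= c + delta / 2 /\ (c - delta / 2) * (kappa * kappa) <= c.
Proof.
  intros Hc Hdelta.
  assert (Hd : 0 < delta / (2 * c)) by (apply Rdiv_lt_0_compat; lra).
  exists (sqrt (1 + delta / (2 * c))).
  rewrite sqrt_sqrt by lra.
  assert (Hhi : c * (1 + delta / (2 * c)) = c + delta / 2) by (field; lra).
  set (d := delta / (2 * c)) in *.
  assert (0 < delta * d) by (apply Rmult_lt_0_compat; lra).
  split; [|split; [lra | nra]].
  rewrite <- sqrt_1 at 1; apply sqrt_lt_1_alt; lra.
Qed.

Lemma Prob_deviation_le_exp (g : nat -> R) (alpha c delta : R) :
  n_alpha_type g alpha -> 0 < c -> 0 < delta ->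
  exists b, 0 < b /\ Rbar_locally p_infty (fun T =>
    forall A : nat -> Prop,
      (forall n, A n -> (c + delta) * T <= INR n \/ INR n <= (c - delta) * T) ->
      0 <= Prob g (Rpower (c * T) alpha) A <= exp (- (b * T))).
Proof.
  intros Hg Hc Hdelta.
  pose proof (n_alpha_type_pos g alpha Hg) as Hgpos.
  destruct (Hg) as [[Halpha _] (_ & _ & _ & Hincr & _)].
  destruct (exists_threshold_ratio c delta Hc Hdelta) as (kappa & Hkappa & Hhi & Hlo).
  set (a := alpha * ln kappa).
  assert (Ha : 0 < a).
  { apply Rmult_lt_0_compat; [lra | rewrite <- ln_1; apply ln_increasing; lra]. }
  set (q := Rpower (/ kappa) alpha).
  assert (Hq_exp : q = exp (- a)).
  { unfold q, a, Rpower; rewrite ln_Rinv by lra; f_equal; ring. }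
  assert (Hq : 0 <= q < 1).
  { rewrite Hq_exp; split; [apply Rlt_le, exp_pos|].
    rewrite <- exp_0; apply exp_increasing; lra. }
  exists (a * delta / 4); split; [nra|].
  pose proof (deviation_gap g alpha c delta kappa Halpha Hc Hdelta Hkappa
    Hhi Hlo (n_alpha_type_sandwich g alpha kappa Hg Hkappa)) as Hgap.
  pose proof (linear_le_exp (a * delta / 4) (exp (2 * a) * (c + delta)) (exp (2 * a) * / (1 - q))
    ltac:(nra)) as Hlin.
  generalize (filter_and _ _ Hgap Hlin).
  apply filter_imp; intros T [(m & m' & K & Hup & Hdown & Hsplit & HmK & HK) HT] A HA.
  assert (Hlam : 0 < Rpower (c * T) alpha) by apply Rpower_pos.
  destruct (Prob_le_of_gap g (Rpower (c * T) alpha) Hgpos Hincr Hlam q m m' Hq Hup Hdown A K)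
    as [HP0 HP]; [intros n An; apply Hsplit, HA, An|].
  split; [exact HP0|].
  assert (HqK : q ^ K <= exp (2 * a) * exp (- (a * delta / 2 * T))).
  { rewrite Hq_exp, <- exp_plus.
    replace (2 * a + - (a * delta / 2 * T)) with (- (a * (delta * T / 2 - 2))) by lra.
    apply exp_pow_le; lra. }
  pose proof (exp_pos (- (a * delta / 2 * T))); pose proof (exp_pos (2 * a)).
  assert (0 <= q ^ K) by (apply pow_le; lra).
  assert (HD : 0 < / (1 - q)) by (apply Rinv_0_lt_compat; lra).
  pose proof (pos_INR (m + K)).
  apply Rle_trans with (exp (2 * a) * exp (- (a * delta / 2 * T)) * (INR (m + K) + / (1 - q)));
    [apply Rle_trans with (1 := HP), Rmult_le_compat_r; [lra | exact HqK]|].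
  replace (- (a * delta / 4 * T)) with (- (a * delta / 2 * T) + a * delta / 4 * T) by lra.
  rewrite exp_plus; nra.
Qed.

Lemma Prob_zero_intensity (g : nat -> R) (A : nat -> Prop) : ~ A 0%nat -> Prob g 0 A = 0.
Proof.
  intros HA0; unfold Prob.
  transitivity (Series (fun _ : nat => 0)); [apply Series_ext | apply Series_const_0].
  intros [|n]; destruct excluded_middle_informative; try contradiction; try reflexivity.
  unfold Pdist; simpl; unfold Rdiv; ring.
Qed.

Lemma scaled_log_of_exp_bound (r s b : R) (p : nat -> R) :
  r < s -> 0 < b ->
  eventually (fun N => 0 <= p N <= exp (- (b * Rpower (INR N) s))) ->
  scaled_log_to_minus_infty r p.
Proof.
  intros Hrs Hb Hp M.
  pose proof (proj2 (is_lim_seq_spec _ _) (is_lim_seq_Rpower_INR (s - r) ltac:(lra)) (- M / b))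
    as Hbig.
  pose proof (proj2 (is_lim_seq_spec _ _) is_lim_seq_INR 0) as Hpos.
  destruct (filter_and _ _ Hp (filter_and _ _ Hbig Hpos)) as [N0 HN0].
  exists N0; intros N HN0N.
  destruct (HN0 N HN0N) as [[[Hp0 | Hp0] Hpb] [HMb HN]]; [right | left; auto].
  split; [exact Hp0|].
  rewrite rpow_pos_eq by exact HN.
  assert (Hln : ln (p N) <= - (b * Rpower (INR N) s)).
  { rewrite <- (ln_exp (- (b * Rpower (INR N) s))); apply ln_le; auto. }
  assert (Hr : 0 < Rpower (INR N) (- r)) by apply Rpower_pos.
  assert (Hsr : Rpower (INR N) (- r) * Rpower (INR N) s = Rpower (INR N) (s - r)).
  { rewrite <- Rpower_plus; f_equal; lra. }
  apply Rle_trans with (Rpower (INR N) (- r) * - (b * Rpower (INR N) s));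
    [apply Rmult_le_compat_l; lra|].
  apply (Rmult_lt_compat_l b) in HMb; [|exact Hb].
  replace (b * (- M / b)) with (- M) in HMb by (field; lra).
  nra.
Qed.

Lemma intensity_as_power (alpha beta phi x : R) :
  0 < alpha -> 0 < phi -> 0 < x ->
  rpow x beta * phi = Rpower (Rpower phi (1 / alpha) * Rpower x (beta / alpha)) alpha.
Proof.
  intros Halpha Hphi Hx.
  rewrite rpow_pos_eq, <- Rpower_mult_distr, !Rpower_mult by (auto; apply Rpower_pos).
  replace (1 / alpha * alpha) with 1 by (field; lra).
  replace (beta / alpha * alpha) with beta by (field; lra).
  rewrite Rpower_1 by exact Hphi; ring.
Qed.

Lemma Rabs_scaled_ge (T x c delta : R) :
  0 < T -> Rabs (/ T * x - c) >= delta -> (c + delta) * T <= x \/ x <= (c - delta) * T.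
Proof.
  intros HT Hx.
  replace x with (T * (/ T * x)) by (field; lra).
  unfold Rabs in Hx; destruct Rcase_abs in Hx; [right | left]; nra.
Qed.

Theorem mainTheorem13 (g : nat -> R) (alpha beta phi : R) :
  n_alpha_type g alpha ->
  beta > alpha ->
  0 <= phi ->
  forall r0 delta : R, r0 < beta / alpha -> delta > 0 ->
  scaled_log_to_minus_infty r0
    (fun N : nat =>
       Prob g (rpow (INR N) beta * phi)
         (fun n : nat =>
            Rabs (rpow (INR N) (- (beta / alpha)) * INR n - rpow phi (1 / alpha))
              >= delta)).
Proof.
  intros Hg Hab Hphi r0 delta Hr0 Hdelta.
  assert (Halpha : 0 < alpha) by apply Hg.
  destruct Hphi as [Hphi | <-].
  2:{ intros M; exists 0%nat; intros N _; left.
      rewrite Rmult_0_r; apply Prob_zero_intensity.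
      unfold rpow at 2; destruct Rle_dec; [|lra].
      rewrite Rmult_0_r, Rminus_0_r, Rabs_R0; lra. }
  assert (Hs : 0 < beta / alpha) by (apply Rdiv_lt_0_compat; lra).
  set (c := Rpower phi (1 / alpha)).
  destruct (Prob_deviation_le_exp g alpha c delta Hg ltac:(apply Rpower_pos) Hdelta)
    as (b & Hb & Hdev).
  apply (scaled_log_of_exp_bound r0 (beta / alpha) b); auto.
  pose proof (is_lim_seq_Rpower_INR _ Hs _ Hdev) as Hdev_N; unfold filtermap in Hdev_N.
  generalize (filter_and _ _ Hdev_N (proj2 (is_lim_seq_spec _ _) is_lim_seq_INR 0)).
  apply filter_imp; intros N [HN HNpos].
  rewrite (intensity_as_power alpha) by assumption; apply HN.
  intros n.
  rewrite rpow_pos_eq, Rpower_Ropp, (rpow_pos_eq phi) by assumption.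
  apply Rabs_scaled_ge, Rpower_pos.
Qed.
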